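(* Let $\varphi:\mathbb{M}(n)\to\mathbb{C}$ be a positive unital linear functional and let $A\in\mathbb{M}(n)$ be Hermitian. Put $B=A-\varphi(A)I$. Then $$\varphi(B^4)\le\frac{\operatorname{spd}(A)^4}{12}$$ and $$\varphi(B^2)\varphi(B^4)-\varphi(B^2)^3-\varphi(B^3)^2\le\frac{\operatorname{spd}(A)^6}{432}.$$
   Context: $\mathbb{M}(n)$ is the algebra of $n\times n$ complex matrices. A linear functional $\varphi$ on $\mathbb{M}(n)$ is positive if $\varphi(A)\ge0$ whenever $A$ is positive semidefinite, and unital if $\varphi(I)=1$. For $A$ with eigenvalues $\lambda_1,\dots,\lambda_n$, the spread is $\operatorname{spd}(A)=\max_{i,j}|\lambda_i-\lambda_j|$. *)

(* Complex numbers are modelled as R[i] for R : realType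
   (real_closed's complex, a numClosedFieldType). *)
From HB Require Import structures.
From mathcomp Require Import all_boot all_order all_algebra.
From mathcomp Require Import reals complex.
Set Implicit Arguments. Unset Strict Implicit. Unset Printing Implicit Defensive.
Import Order.TTheory GRing.Theory Num.Theory.
Local Open Scope ring_scope.

Section Defs.
Variable C : numClosedFieldType.
Variable n : nat.

Definition hermitian_mx (A : 'M[C]_n) : Prop := A \is hermsymmx.

Definition psd (A : 'M[C]_n) : Prop :=
  hermitian_mx A /\ forall x : 'rV[C]_n, 0 <= (x *m A *m (map_mx Num.conj x)^T) 0 0.

Definition lin_functional (phi : 'M[C]_n -> C) : Prop :=
  forall (a : C) (X Y : 'M[C]_n), phi (a *: X + Y) = a * phi X + phi Y.

Definition positive_functional (phi : 'M[C]_n -> C) : Prop :=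
  forall A : 'M[C]_n, psd A -> 0 <= phi A.

Definition unital_functional (phi : 'M[C]_n -> C) : Prop := phi 1%:M = 1.

(* Eigenvalues of A, listed with (algebraic) multiplicity: the roots of the
   characteristic polynomial (which splits since C is algebraically closed). *)
Definition eigvals (A : 'M[C]_n) : seq C :=
  sval (closed_field_poly_normal (char_poly A)).

Definition spd (A : 'M[C]_n) : C :=
  \big[Num.max/0]_(a <- eigvals A) \big[Num.max/0]_(b <- eigvals A) `|a - b|.
End Defs.

(* Diagonalising A = U^* diag(l) U with U unitary gives phi (p(A)) = sum_k p(l_k) w_k
   for every polynomial p, with weights w_k = phi (U^* E_kk U) >= 0 summing to 1.  So
   phi acts as the expectation of a probability distribution on the eigenvalues, and
   the moments of B are the centered moments of a distribution supported on an
   interval [a, b] with b - a <= spd A.  Integrating the nonnegative polynomials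
   (t - a)(b - t), (t - a)(b - t) t^2 and (t - a)(b - t) (t + (a + b)/2)^2 bounds the
   fourth moment by lower ones, and both inequalities then reduce to sum-of-squares
   identities in a + b, b - a and the moments. *)

From HB Require Import structures.
From mathcomp Require Import all_boot all_order all_algebra.
From mathcomp Require Import reals complex.
From mathcomp Require Import ring lra.
Import Order.TTheory GRing.Theory Num.Theory.
Local Open Scope ring_scope.

Section LinearFunctional.
Context {C : numClosedFieldType} {n : nat} (phi : 'M[C]_n -> C).
Hypothesis phi_lin : lin_functional phi.

Lemma lin_functional0 : phi 0 = 0.
Proof.
have := phi_lin 1 0 0; rewrite scale1r addr0 mul1r.
by move/(congr1 (fun z => z - phi 0)); rewrite subrr addrK.
Qed.

Lemma lin_functionalD X Y : phi (X + Y) = phi X + phi Y.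
Proof. by have := phi_lin 1 X Y; rewrite scale1r mul1r. Qed.

Lemma lin_functionalZ a X : phi (a *: X) = a * phi X.
Proof. by have := phi_lin a X 0; rewrite !addr0 lin_functional0 addr0. Qed.

Lemma lin_functional_sum (I : finType) (F : I -> 'M[C]_n) :
  phi (\sum_i F i) = \sum_i phi (F i).
Proof. exact: (big_morph phi lin_functionalD lin_functional0). Qed.

End LinearFunctional.

Local Open Scope sesquilinear_scope.

Lemma psd_outer_row (C : numClosedFieldType) n (u : 'rV[C]_n) : psd (u ^t* *m u).
Proof.
split.
  by apply/is_hermitianmxP; rewrite expr0 scale1r trmx_mul map_mxM trmxCK.
move=> x; rewrite (_ : (map_mx Num.conj x)^T = x ^t*); last by rewrite map_trmx.
have -> : x *m (u ^t* *m u) *m x ^t* = (u *m x ^t*) ^t* *m (u *m x ^t*).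
  by rewrite trmx_mul map_mxM trmxCK !mulmxA.
by rewrite mxE big_ord1 !mxE mulrC mul_conjC_ge0.
Qed.

Section SpectralWeights.
Context {C : numClosedFieldType} {n : nat} (phi : 'M[C]_n -> C) (A : 'M[C]_n).
Hypotheses (phi_lin : lin_functional phi) (phi_pos : positive_functional phi)
  (phi_unital : unital_functional phi) (A_herm : hermitian_mx A).

Local Notation P := (spectralmx A).
Local Notation Q := (invmx (spectralmx A)).
Local Notation d := (spectral_diag A).

Definition spectral_weight k := phi (Q *m delta_mx k k *m P).

Lemma mulVspectralmx : Q *m P = 1%:M.
Proof. exact: mulVmx (spectral_unit A). Qed.

Lemma mulspectralmxV : P *m Q = 1%:M.
Proof. exact: mulmxV (spectral_unit A). Qed.

Lemma hermitian_spectral_decomposition : A = Q *m diag_mx d *m P.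
Proof. exact/orthomx_spectralP/hermitian_normalmx. Qed.

Lemma spectral_weight_ge0 k : 0 <= spectral_weight k.
Proof.
apply: phi_pos.
rewrite -(mul_delta_mx (0 : 'I_1)) mulmxA -colE -mulmxA -rowE.
rewrite invmx_unitary ?spectral_unitarymx // -map_col -tr_row.
exact: psd_outer_row.
Qed.

Lemma lin_functional_spectral v :
  phi (Q *m diag_mx v *m P) = \sum_k v 0 k * spectral_weight k.
Proof.
rewrite diag_mx_sum_delta mulmx_sumr mulmx_suml lin_functional_sum //.
by apply: eq_bigr => k _; rewrite -scalemxAr -scalemxAl lin_functionalZ.
Qed.

Lemma sum_spectral_weight : \sum_k spectral_weight k = 1.
Proof.
have := lin_functional_spectral (const_mx 1).
rewrite diag_const_mx mulmx1 mulVspectralmx phi_unital => ->.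
by apply: eq_bigr => k _; rewrite mxE mul1r.
Qed.

Lemma lin_functional_hermitian : phi A = \sum_k d 0 k * spectral_weight k.
Proof. by rewrite {1}hermitian_spectral_decomposition lin_functional_spectral. Qed.

Lemma spectral_conj_exp v j :
  (Q *m diag_mx v *m P) ^+ j = Q *m diag_mx (\row_k (v 0 k ^+ j)) *m P.
Proof.
elim: j => [|j IHj].
  have -> : \row_k (v 0 k ^+ 0) = const_mx 1 by apply/rowP => k; rewrite !mxE.
  by rewrite diag_const_mx mulmx1 mulVspectralmx.
rewrite exprS IHj -mulmxE !mulmxA -[_ *m P *m Q]mulmxA mulspectralmxV mulmx1.
rewrite -[Q *m _ *m _]mulmxA mulmx_diag.
by congr (_ *m diag_mx _ *m _); apply/rowP => k; rewrite !mxE exprS.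
Qed.

Lemma lin_functional_shift_exp c j :
  phi ((A - c%:M) ^+ j) = \sum_k (d 0 k - c) ^+ j * spectral_weight k.
Proof.
have -> : A - c%:M = Q *m diag_mx (\row_k (d 0 k - c)) *m P.
  have -> : diag_mx (\row_k (d 0 k - c)) = diag_mx d - c%:M.
    by apply/matrixP => i j'; rewrite !mxE mulrnBl.
  rewrite mulmxBr mulmxBl -hermitian_spectral_decomposition mul_mx_scalar.
  by rewrite -scalemxAl mulVspectralmx scalemx1.
rewrite spectral_conj_exp lin_functional_spectral.
by apply: eq_bigr => k _; rewrite !mxE.
Qed.

Lemma spectral_diag_real k : d 0 k \is Num.real.
Proof. by have /mxOverP := hermitian_spectral_diag_real A_herm; apply. Qed.

Lemma spectral_diag_eigenvalue k : eigenvalue A (d 0 k).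
Proof.
apply/eigenvalueP; exists (delta_mx 0 k *m P).
  rewrite {2}hermitian_spectral_decomposition !mulmxA.
  rewrite -[_ *m P *m Q]mulmxA mulspectralmxV mulmx1.
  by rewrite -[delta_mx 0 k *m diag_mx d]rowE row_diag_mx scalemxAl.
apply/negP => /eqP /(congr1 (mulmx^~ Q)).
rewrite /= mul0mx -mulmxA mulspectralmxV mulmx1 => /matrixP /(_ 0 k).
by rewrite !mxE !eqxx => /eqP; rewrite oner_eq0.
Qed.

End SpectralWeights.

Lemma le_bigmax_real {R : numDomainType} {T : eqType} (F : T -> R) (s : seq T) x :
  (forall y, F y \is Num.real) -> x \in s -> F x <= \big[Num.max/0]_(y <- s) F y.
Proof.
move=> F_real; elim: s => // a s IHs; rewrite inE big_cons.
have cmp : F a >=< \big[Num.max/0]_(y <- s) F y.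
  by apply: real_comparable; rewrite ?bigmax_real.
by case/orP => [/eqP-> | /IHs le_x]; rewrite comparable_le_max // ?lexx ?le_x ?orbT.
Qed.

Lemma eigenvalue_eigvals {C : numClosedFieldType} {n} {A : 'M[C]_n} {a} :
  eigenvalue A a -> a \in eigvals A.
Proof.
rewrite eigenvalue_root_char /eigvals; case: closed_field_poly_normal => s /= ->.
by rewrite (monicP (char_poly_monic A)) scale1r root_prod_XsubC.
Qed.

Lemma spd_real {C : numClosedFieldType} {n} (A : 'M[C]_n) : spd A \is Num.real.
Proof.
by apply: bigmax_real => // a _; apply: bigmax_real => // b _; apply: normr_real.
Qed.

Lemma norm_eigvals_sub_le_spd {C : numClosedFieldType} {n} {A : 'M[C]_n} {a b} :
  a \in eigvals A -> b \in eigvals A -> `|a - b| <= spd A.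
Proof.
move=> a_eig b_eig; rewrite /spd.
pose F x := \big[Num.max/0]_(y <- eigvals A) `|x - y|.
apply: le_trans (le_bigmax_real F _ _ _ a_eig).
  by apply: (le_bigmax_real (fun y => `|a - y|)) => // y; apply: normr_real.
by move=> x; apply: bigmax_real => // y _; apply: normr_real.
Qed.

Lemma moments_quartic_ge0 {R : realDomainType} {I : finType} (w t : I -> R)
    (c0 c1 c2 c3 c4 : R) :
  (forall k, 0 <= w k) ->
  (forall k, 0 <= c0 + c1 * t k + c2 * t k ^+ 2 + c3 * t k ^+ 3 + c4 * t k ^+ 4) ->
  0 <= c0 * \sum_k w k + c1 * \sum_k t k * w k + c2 * \sum_k t k ^+ 2 * w k
       + c3 * \sum_k t k ^+ 3 * w k + c4 * \sum_k t k ^+ 4 * w k.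
Proof.
move=> w_ge0 p_ge0; rewrite !mulr_sumr -!big_split /=.
apply: sumr_ge0 => k _; apply: le_trans (mulr_ge0 (p_ge0 k) (w_ge0 k)) _.
by rewrite le_eqVlt; apply/orP; left; apply/eqP; ring.
Qed.

Lemma centered_moment1 {R : comPzRingType} {I : finType} (r w : I -> R) :
  \sum_k w k = 1 -> \sum_k (r k - \sum_l r l * w l) * w k = 0.
Proof.
move=> w_sum1; under eq_bigr => k _ do rewrite mulrBl.
by rewrite sumrB -mulr_sumr w_sum1 mulr1 subrr.
Qed.

Lemma centered_moment4_le (R : realFieldType) (a b m2 m4 : R) :
  m2 <= - (a * b) ->
  m4 <= (3%:R / 4%:R * (a + b) ^+ 2 - a * b) * m2 - a * b * (a + b) ^+ 2 / 4%:R ->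
  m4 <= (b - a) ^+ 4 / 12%:R.
Proof.
have -> : a * b = ((a + b) ^+ 2 - (b - a) ^+ 2) / 4%:R by field.
move: (a + b) (b - a) => s D m2_le m4_le.
set K := (3%:R / 4%:R * s ^+ 2 - _) in m4_le.
set c := (_ / 4%:R * s ^+ 2 / 4%:R) in m4_le.
have K_ge0 : 0 <= K.
  have -> : K = s ^+ 2 / 2%:R + D ^+ 2 / 4%:R by rewrite /K; field.
  by rewrite addr_ge0 // divr_ge0 ?sqr_ge0.
have KM := ler_wpM2l K_ge0 m2_le.
have -> : D ^+ 4 / 12%:R
    = K * - ((s ^+ 2 - D ^+ 2) / 4%:R) - c + 3%:R / 16%:R * (s ^+ 2 - D ^+ 2 / 3%:R) ^+ 2.
  by rewrite /K /c; field.
have := sqr_ge0 (s ^+ 2 - D ^+ 2 / 3%:R).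
lra.
Qed.

Lemma centered_moment_det_le (R : realFieldType) (a b m2 m3 m4 : R) :
  0 <= m2 -> m4 <= (a + b) * m3 - a * b * m2 ->
  m2 * m4 - m2 ^+ 3 - m3 ^+ 2 <= (b - a) ^+ 6 / 432%:R.
Proof.
have -> : a * b = ((a + b) ^+ 2 - (b - a) ^+ 2) / 4%:R by field.
move: (a + b) (b - a) => s D m2_ge0 m4_le.
have mM := ler_wpM2l m2_ge0 m4_le.
have -> : D ^+ 6 / 432%:R
    = m2 * (s * m3 - (s ^+ 2 - D ^+ 2) / 4%:R * m2) - m2 ^+ 3 - m3 ^+ 2
      + (m3 - s / 2%:R * m2) ^+ 2
      + (m2 - D ^+ 2 / 6%:R) ^+ 2 * (m2 + D ^+ 2 / 12%:R).
  by field.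
have : 0 <= (m2 - D ^+ 2 / 6%:R) ^+ 2 * (m2 + D ^+ 2 / 12%:R).
  by rewrite mulr_ge0 ?sqr_ge0 // addr_ge0 // divr_ge0 ?sqr_ge0.
have := sqr_ge0 (m3 - s / 2%:R * m2).
lra.
Qed.

Lemma centered_moments_bound {R : realFieldType} {I : finType} {r w : I -> R} {S : R} :
  (forall k, 0 <= w k) -> \sum_k w k = 1 -> (forall k l, r k - r l <= S) ->
  let m j := \sum_k (r k - \sum_l r l * w l) ^+ j * w k in
  m 4%N <= S ^+ 4 / 12%:R /\ m 2%N * m 4%N - m 2%N ^+ 3 - m 3%N ^+ 2 <= S ^+ 6 / 432%:R.
Proof.
move=> w_ge0 w_sum1 r_spread; set mu := \sum_l r l * w l => m.
have [k0 _ | I0] := pickP (@predT I); last first.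
  by move: w_sum1; rewrite big_pred0 // => /eqP; rewrite eq_sym oner_eq0.
have [kmin _ r_min] := @arg_minP _ _ _ k0 predT r isT.
have [kmax _ r_max] := @arg_maxP _ _ _ k0 predT r isT.
set a := r kmin - mu; set b := r kmax - mu.
have ge_a k : 0 <= r k - mu - a by rewrite /a opprB addrA subrK subr_ge0 r_min.
have le_b k : 0 <= b - (r k - mu) by rewrite /b opprB addrA subrK subr_ge0; apply: r_max.
have spread_ab : 0 <= b - a <= S.
  by rewrite /a /b opprB addrA subrK subr_ge0 r_spread andbT; apply: r_max.
have moment_ge0 c0 c1 c2 c3 c4 (p : R -> R) :
    (forall x, p x = c0 + c1 * x + c2 * x ^+ 2 + c3 * x ^+ 3 + c4 * x ^+ 4) ->
    (forall k, 0 <= p (r k - mu)) -> 0 <= c0 + c2 * m 2%N + c3 * m 3%N + c4 * m 4%N.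
  move=> pE p_ge0.
  have := @moments_quartic_ge0 _ _ w (fun k => r k - mu) c0 c1 c2 c3 c4 w_ge0.
  rewrite centered_moment1 // w_sum1 mulr1 mulr0 addr0.
  by apply=> k; rewrite -pE.
have m2_le := moment_ge0 (- (a * b)) (a + b) (-1) 0 0 (fun x => (x - a) * (b - x))
  ltac:(move=> x; ring) (fun k => mulr_ge0 (ge_a k) (le_b k)).
have m4_le_m3 := moment_ge0 0 0 (- (a * b)) (a + b) (-1)
  (fun x => (x - a) * (b - x) * x ^+ 2) ltac:(move=> x; ring)
  (fun k => mulr_ge0 (mulr_ge0 (ge_a k) (le_b k)) (sqr_ge0 _)).
have m4_le_m2 := moment_ge0 (- (a * b) * (a + b) ^+ 2 / 4%:R)
  ((a + b) ^+ 3 / 4%:R - a * b * (a + b)) (3%:R / 4%:R * (a + b) ^+ 2 - a * b) 0 (-1)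
  (fun x => (x - a) * (b - x) * (x + (a + b) / 2%:R) ^+ 2) ltac:(move=> x; field)
  (fun k => mulr_ge0 (mulr_ge0 (ge_a k) (le_b k)) (sqr_ge0 _)).
have m2_ge0 : 0 <= m 2%N by apply: sumr_ge0 => k _; rewrite mulr_ge0 ?sqr_ge0.
have [D_ge0 D_le] := andP spread_ab.
have pow_le j : (b - a) ^+ j <= S ^+ j by rewrite lerXn2r ?nnegrE //; apply: le_trans D_le.
(* Abstracting the moments keeps lra from unfolding the sums they stand for. *)
clearbody a b; move: (m 2%N) (m 3%N) (m 4%N) m2_le m4_le_m3 m4_le_m2 m2_ge0.
move=> m2 m3 m4 m2_le m4_le_m3 m4_le_m2 m2_ge0.
split.
  apply: le_trans (@centered_moment4_le _ a b m2 m4 _ _) _; [lra | lra |].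
  by rewrite ler_pM2r ?invr_gt0 ?ltr0n.
apply: le_trans (@centered_moment_det_le _ a b m2 m3 m4 m2_ge0 _) _; first lra.
by rewrite ler_pM2r ?invr_gt0 ?ltr0n.
Qed.

Local Open Scope complex_scope.

Lemma hermitian_spectral_moments {R : rcfType} {n} {phi : 'M[R[i]]_n -> R[i]}
    {A : 'M[R[i]]_n} :
  lin_functional phi -> positive_functional phi -> unital_functional phi ->
  hermitian_mx A ->
  exists r w : 'I_n -> R,
  [/\ forall k, 0 <= w k, \sum_k w k = 1,
      forall k l, r k - r l <= complex.Re (spd A) &
      forall j, phi ((A - (phi A)%:M) ^+ j)
                = (\sum_k (r k - \sum_l r l * w l) ^+ j * w k)%:C].
Proof.
move=> phi_lin phi_pos phi_unital A_herm.
pose r k := complex.Re (spectral_diag A 0 k).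
pose w k := complex.Re (spectral_weight phi A k).
have dE k : spectral_diag A 0 k = (r k)%:C by rewrite RRe_real ?spectral_diag_real.
have wE k : spectral_weight phi A k = (w k)%:C.
  by rewrite RRe_real // ger0_real ?spectral_weight_ge0.
have phiAE : phi A = (\sum_l r l * w l)%:C.
  rewrite lin_functional_hermitian // rmorph_sum.
  by apply: eq_bigr => l _; rewrite dE wE rmorphM.
exists r, w; split.
- by move=> k; rewrite -ler0c -wE spectral_weight_ge0.
- apply: complexI; rewrite rmorph_sum rmorph1.
  rewrite -(sum_spectral_weight phi A phi_lin phi_unital).
  by apply: eq_bigr => k _; rewrite wE.
- move=> k l; rewrite -lecR RRe_real ?spd_real //.
  have eig k' := eigenvalue_eigvals (spectral_diag_eigenvalue A A_herm k').
  apply: le_trans (norm_eigvals_sub_le_spd (eig k) (eig l)).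
  by rewrite !dE -rmorphB real_ler_norm ?complex_real.
- move=> j; rewrite phiAE lin_functional_shift_exp // [RHS]rmorph_sum.
  by apply: eq_bigr => k _; rewrite dE wE rmorphM rmorphXn rmorphB.
Qed.

Theorem theorem3p1 (R : realType) (n : nat) (phi : 'M[R[i]]_n -> R[i])
  (A : 'M[R[i]]_n) :
  lin_functional phi -> positive_functional phi -> unital_functional phi ->
  hermitian_mx A ->
  let B := A - (phi A)%:M in
  phi (B ^+ 4) <= spd A ^+ 4 / 12%:R /\
  phi (B ^+ 2) * phi (B ^+ 4) - phi (B ^+ 2) ^+ 3 - phi (B ^+ 3) ^+ 2
    <= spd A ^+ 6 / 432%:R.
Proof.
move=> phi_lin phi_pos phi_unital A_herm B.
have [r [w [w_ge0 w_sum1 r_spread phiBE]]] :=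
  hermitian_spectral_moments phi_lin phi_pos phi_unital A_herm.
have [le4 le6] := centered_moments_bound w_ge0 w_sum1 r_spread.
rewrite !phiBE -(RRe_real (spd_real A)).
have cast_div (x : R) (k : nat) : x%:C / k%:R = (x / k%:R)%:C.
  by rewrite rmorphM fmorphV rmorph_nat.
by rewrite -!rmorphXn !cast_div -!rmorphM -!rmorphB !lecR.
Qed.
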